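(* Let $\mathcal{H}$ be a finite-dimensional complex Hilbert space, let $\ket{\psi_1},\ket{\psi_2}\in\mathcal{H}$ be pure states, let $\rho=\tfrac12(\ket{\psi_1}\!\bra{\psi_1}+\ket{\psi_2}\!\bra{\psi_2})$, and let $\alpha,\beta\in[0,1]$. Then for every ontological model (as defined in the context) for these preparations, $$\omega_Q(\psi_1,\psi_2;\alpha,\beta)-\omega_{\Lambda}(\psi_1,\psi_2;\alpha,\beta)\geq B_Q(\psi_1,\psi_2,\rho;\alpha,\beta),$$ where $$B_Q(\psi_1,\psi_2,\rho;\alpha,\beta)=2\Big((1-\alpha)D_Q(\psi_1,\psi_2)+D_Q\big(\{\psi_1,\tfrac{1+\beta}{2}\},\{\rho,\alpha+\beta\}\big)+D_Q\big(\{\psi_2,\tfrac{1+\beta}{2}\},\{\rho,\alpha+\beta\}\big)-S^{Gam}_Q(\psi_1,\psi_2;\alpha,\beta)-2\beta-1\Big).$$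
   Context: Probabilities: for a (pure or mixed) state $\sigma$ and a POVM $\mathcal{M}=\{M_k\}_k$, $p(k|\sigma,\mathcal{M})=\mathrm{Tr}(\sigma M_k)$. Weighted distinguishability: for states $\phi_1,\phi_2$ and weights $w_1,w_2\ge 0$, $D_Q(\{\phi_1,w_1\},\{\phi_2,w_2\})=\max_{\mathcal{M}}\big(w_1p(1|\phi_1,\mathcal{M})+w_2p(2|\phi_2,\mathcal{M})\big)$, the maximum over all two-outcome POVMs $\mathcal{M}=\{M_1,M_2\}$. Write $D_Q(\psi_1,\psi_2)=D_Q(\{\psi_1,\tfrac12\},\{\psi_2,\tfrac12\})$. Quantum gambling value: $S^{Gam}_Q(\psi_1,\psi_2;\alpha,\beta)=\tfrac12\max_{\mathcal{M}}\big(p(1|\psi_1,\mathcal{M})-\beta p(2|\psi_1,\mathcal{M})+\alpha p(3|\psi_1,\mathcal{M})+p(2|\psi_2,\mathcal{M})-\beta p(1|\psi_2,\mathcal{M})+\alpha p(3|\psi_2,\mathcal{M})\big)$, maximum over all three-outcome POVMs $\mathcal{M}=\{M_1,M_2,M_3\}$. The generalized quantum overlap is $\omega_Q(\psi_1,\psi_2;\alpha,\beta)=2\big(1-S^{Gam}_Q(\psi_1,\psi_2;\alpha,\beta)\big)$. Ontological model: a measure space $(\Lambda,d\lambda)$ (ontic state space); to each preparation $\sigma\in\{\psi_1,\psi_2,\rho\}$ a probability density $\mu(\lambda|\sigma)\ge0$, $\int_\Lambda\mu(\lambda|\sigma)d\lambda=1$ (epistemic state); to each $n$-outcome POVM $\mathcal{M}=\{M_k\}$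 response functions $\xi(k|\lambda,\mathcal{M})\ge0$ with $\sum_k\xi(k|\lambda,\mathcal{M})=1$ for all $\lambda$; such that $\mathrm{Tr}(\sigma M_k)=\int_\Lambda\mu(\lambda|\sigma)\xi(k|\lambda,\mathcal{M})d\lambda$ for all such $\sigma,\mathcal{M},k$. Moreover the epistemic state of the mixture respects its convex decomposition: $\mu(\lambda|\rho)=\tfrac12(\mu(\lambda|\psi_1)+\mu(\lambda|\psi_2))$ for all $\lambda$. Generalized epistemic overlap: with $\tilde\mu_1=(1+\beta)\mu(\cdot|\psi_1)$, $\tilde\mu_2=(1+\beta)\mu(\cdot|\psi_2)$, $\tilde\mu_3=(\alpha+\beta)(\mu(\cdot|\psi_1)+\mu(\cdot|\psi_2))$, $\omega_\Lambda(\psi_1,\psi_2;\alpha,\beta)=\int_\Lambda\min(\tilde\mu_1,\tilde\mu_2)d\lambda+\int_\Lambda\min(\tilde\mu_1,\tilde\mu_3)d\lambda+\int_\Lambda\min(\tilde\mu_2,\tilde\mu_3)d\lambda-2(\alpha+\beta)-\int_\Lambda\min(\tilde\mu_1,\tilde\mu_2,\tilde\mu_3)d\lambda$. *)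

From HB Require Import structures.
From mathcomp Require Import all_boot all_order all_algebra.
From mathcomp Require Import complex.
From mathcomp Require Import all_classical all_reals all_analysis.

Set Implicit Arguments.
Unset Strict Implicit.
Unset Printing Implicit Defensive.
Import Order.TTheory GRing.Theory Num.Theory.
Local Open Scope ring_scope.
Local Open Scope classical_set_scope.

Section Quantum.
Variable R : realType.
Local Notation C := (R[i]).

Definition adj m k (A : 'M[C]_(m, k)) : 'M[C]_(k, m) := (map_mx Num.conj A)^T.

Variable n : nat. (* dimension of the Hilbert space H = C^n *)

Definition unit_vector (psi : 'cV[C]_n) : Prop := adj psi *m psi = 1%:M.

Definition proj (psi : 'cV[C]_n) : 'M[C]_n := psi *m adj psi.

Definition mixture (psi1 psi2 : 'cV[C]_n) : 'M[C]_n :=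
  (2%:R^-1 : C) *: (proj psi1 + proj psi2).

Definition psd (A : 'M[C]_n) : Prop := forall v : 'cV[C]_n, 0 <= (adj v *m A *m v) 0 0.

Definition is_POVM k (M : 'I_k -> 'M[C]_n) : Prop :=
  (forall i, psd (M i)) /\ \sum_(i < k) M i = 1%:M.

Definition prob k (sigma : 'M[C]_n) (M : 'I_k -> 'M[C]_n) (i : 'I_k) : R :=
  complex.Re (\tr (sigma *m M i)).

Definition o2_1 : 'I_2 := inord 0.
Definition o2_2 : 'I_2 := inord 1.
Definition o3_1 : 'I_3 := inord 0.
Definition o3_2 : 'I_3 := inord 1.
Definition o3_3 : 'I_3 := inord 2.

(* weighted distinguishability D_Q({phi1,w1},{phi2,w2}); the max over POVMs
   is written as a supremum (it is attained) *)
Definition DQw (phi1 : 'M[C]_n) (w1 : R) (phi2 : 'M[C]_n) (w2 : R) : R :=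
  sup [set x : R | exists M : 'I_2 -> 'M[C]_n,
        is_POVM M /\ x = w1 * prob phi1 M o2_1 + w2 * prob phi2 M o2_2].

Definition DQ (psi1 psi2 : 'cV[C]_n) : R :=
  DQw (proj psi1) (2%:R^-1) (proj psi2) (2%:R^-1).

Definition SGam (psi1 psi2 : 'cV[C]_n) (a b : R) : R :=
  2%:R^-1 * sup [set x : R | exists M : 'I_3 -> 'M[C]_n, is_POVM M /\
     x = prob (proj psi1) M o3_1 - b * prob (proj psi1) M o3_2
         + a * prob (proj psi1) M o3_3
         + prob (proj psi2) M o3_2 - b * prob (proj psi2) M o3_1
         + a * prob (proj psi2) M o3_3].

Definition omegaQ (psi1 psi2 : 'cV[C]_n) (a b : R) : R :=
  2 * (1 - SGam psi1 psi2 a b).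

Definition BQ (psi1 psi2 : 'cV[C]_n) (a b : R) : R :=
  let rho := mixture psi1 psi2 in
  2 * ((1 - a) * DQ psi1 psi2
       + DQw (proj psi1) ((1 + b) / 2) rho (a + b)
       + DQw (proj psi2) ((1 + b) / 2) rho (a + b)
       - SGam psi1 psi2 a b - 2 * b - 1).

Section Model.
Context (d : measure_display) (T : measurableType d)
        (mu : {measure set T -> \bar R}).

(* epistemic state: probability density w.r.t. mu *)
Definition is_density (f : T -> R) : Prop :=
  measurable_fun setT f /\ (forall l, 0 <= f l) /\
  (\int[mu]_x (f x)%:E = 1)%E.

(* ontological model for the preparations psi1, psi2, rho with epistemic
   states m1, m2, mr and response functions xi k M i l = xi(i | l, M) *)
Definition is_ontological_model (psi1 psi2 : 'cV[C]_n)
  (m1 m2 mr : T -> R)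
  (xi : forall k, ('I_k -> 'M[C]_n) -> 'I_k -> T -> R) : Prop :=
  [/\ [/\ is_density m1, is_density m2 & is_density mr],
      (forall k (M : 'I_k -> 'M[C]_n), is_POVM M ->
         (forall i, measurable_fun setT (xi k M i)) /\
         (forall i l, 0 <= xi k M i l) /\
         (forall l, (\sum_(i < k) xi k M i l)%R = 1)),
      (forall k (M : 'I_k -> 'M[C]_n), is_POVM M -> forall i,
         [/\ ((prob (proj psi1) M i)%:E = \int[mu]_x (m1 x * xi k M i x)%:E)%E,
             ((prob (proj psi2) M i)%:E = \int[mu]_x (m2 x * xi k M i x)%:E)%E &
             ((prob (mixture psi1 psi2) M i)%:E
                = \int[mu]_x (mr x * xi k M i x)%:E)%E])
    & (forall l, mr l = 2%:R^-1 * (m1 l + m2 l))].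

Definition omegaL (m1 m2 : T -> R) (a b : R) : \bar R :=
  let t1 x := (1 + b) * m1 x in
  let t2 x := (1 + b) * m2 x in
  let t3 x := (a + b) * (m1 x + m2 x) in
  (\int[mu]_x (Order.min (t1 x) (t2 x))%:E
   + \int[mu]_x (Order.min (t1 x) (t3 x))%:E
   + \int[mu]_x (Order.min (t2 x) (t3 x))%:E
   - (2 * (a + b))%:E
   - \int[mu]_x (Order.min (Order.min (t1 x) (t2 x)) (t3 x))%:E)%E.

End Model.
End Quantum.

(* In an ontological model every weighted distinguishability is bounded by an
   overlap of epistemic states: for a two-outcome POVM with response functions
   xi1 + xi2 = 1, pointwise min(w1 mu1, w2 mu2) <= w1 mu1 xi2 + w2 mu2 xi1, so
   w1 p(1|phi1) + w2 p(2|phi2) <= w1 + w2 - int min(w1 mu1, w2 mu2).  Applied to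
   (psi1, psi2), (psi1, rho) and (psi2, rho) this bounds the three D_Q terms of
   B_Q, in which S^Gam cancels against omega_Q.  Since mu_rho = (mu1 + mu2)/2,
   the overlaps with rho are exactly half of the pairwise terms of omega_Lambda
   involving mu3~, and min(mu1~, mu2~) <= min(mu1~, mu2~, mu3~) + (1 - alpha)
   min(mu1, mu2) pointwise accounts for the remaining two terms. *)

From Pilot Require Import Defs.
From HB Require Import structures.
From mathcomp Require Import all_boot all_order all_algebra.
From mathcomp Require Import complex.
From mathcomp Require Import all_classical all_reals all_analysis.
From mathcomp Require Import measurable_realfun ring lra.
Import Order.TTheory GRing.Theory Num.Theory.
Local Open Scope ring_scope.

Section Integrability.
Context {R : realType} {d : measure_display} {T : measurableType d}
        {mu : {measure set T -> \bar R}}.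
Local Notation Rintegrable f := (mu.-integrable setT (EFin \o f)).
Implicit Types f g : T -> R.

Lemma Rintegrable_measurable {f} : Rintegrable f -> measurable_fun setT f.
Proof. by move=> /(measurable_int mu) /measurable_EFinP. Qed.

Lemma Rintegrable_density {f} : is_density mu f -> Rintegrable f.
Proof.
case=> mf [f0 f1]; apply/integrableP; split; first exact/measurable_EFinP.
under eq_integral do rewrite /= ger0_norm //.
by rewrite f1 ltry.
Qed.

Lemma Rintegral_density {f} : is_density mu f -> \int[mu]_x f x = 1.
Proof. by case=> _ [_ f1]; rewrite /Rintegral f1. Qed.

Lemma EFin_Rintegral {f} :
  Rintegrable f -> (\int[mu]_x f x)%:E = (\int[mu]_x (f x)%:E)%E.
Proof. by move=> fi; rewrite fineK //; exact: integrable_fin_num fi. Qed.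

Lemma RintegrableZ c {f} : Rintegrable f -> Rintegrable (fun x => c * f x).
Proof.
by move=> /(integrableZl measurableT c); apply: eq_integrable => // x _.
Qed.

Lemma RintegrableD {f g} :
  Rintegrable f -> Rintegrable g -> Rintegrable (fun x => f x + g x).
Proof.
by move=> fi gi; have := integrableD measurableT fi gi; apply: eq_integrable.
Qed.

Lemma Rintegrable_le {f g} : Rintegrable f -> measurable_fun setT g ->
  (forall x, 0 <= g x <= f x) -> Rintegrable g.
Proof.
move=> fi mg gf; apply: le_integrable fi => //; first exact/measurable_EFinP.
move=> x _ /=; have /andP[g0 gfx] := gf x.
by rewrite lee_fin !ger0_norm // (le_trans g0).
Qed.

Lemma Rintegrable_min {f g} : Rintegrable f -> Rintegrable g ->
  Rintegrable (fun x => Order.min (f x) (g x)).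
Proof.
move=> fi gi; have fgi := RintegrableD (integrable_norm fi) (integrable_norm gi).
apply: le_integrable fgi => //.
  by apply/measurable_EFinP/measurable_minr; apply: Rintegrable_measurable.
move=> x _ /=; rewrite lee_fin [X in _ <= X]ger0_norm ?addr_ge0 //.
by rewrite /Order.min; case: ifP => _; rewrite ?lerDl ?lerDr.
Qed.

Lemma le_Rintegral_lin f g h c : Rintegrable f -> Rintegrable g -> Rintegrable h ->
  (forall x, f x <= g x + c * h x) ->
  \int[mu]_x f x <= \int[mu]_x g x + c * \int[mu]_x h x.
Proof.
move=> fi gi hi fgh; rewrite -RintegralZl // -RintegralD //; last exact: RintegrableZ.
by apply: le_Rintegral => //; apply: RintegrableD => //; exact: RintegrableZ.
Qed.

Lemma success_add_overlap_le {f g y1 y2 : T -> R} {w1 w2 : R} :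
  Rintegrable f -> Rintegrable g ->
  measurable_fun setT y1 -> measurable_fun setT y2 ->
  (forall x, 0 <= f x) -> (forall x, 0 <= g x) ->
  (forall x, 0 <= y1 x) -> (forall x, 0 <= y2 x) -> (forall x, y1 x + y2 x = 1) ->
  0 <= w1 -> 0 <= w2 ->
  w1 * \int[mu]_x (f x * y1 x) + w2 * \int[mu]_x (g x * y2 x)
    + \int[mu]_x Order.min (w1 * f x) (w2 * g x)
  <= w1 * \int[mu]_x f x + w2 * \int[mu]_x g x.
Proof.
move=> fi gi my1 my2 f0 g0 y10 y20 y12 w10 w20.
have weighted_le (h y : T -> R) : Rintegrable h -> measurable_fun setT y ->
    (forall x, 0 <= h x) -> (forall x, 0 <= y x <= 1) ->
    Rintegrable (fun x => h x * y x).
  move=> hi my h0 y01; apply: (Rintegrable_le hi).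
    by apply: measurable_funM => //; exact: Rintegrable_measurable.
  move=> x; have /andP[y0 y_le1] := y01 x.
  by rewrite mulr_ge0 // ler_piMr.
have y1_01 x : 0 <= y1 x <= 1 by rewrite y10 -(y12 x) lerDl y20.
have y2_01 x : 0 <= y2 x <= 1 by rewrite y20 -(y12 x) lerDr y10.
have fy1 := weighted_le _ _ fi my1 f0 y1_01.
have gy2 := weighted_le _ _ gi my2 g0 y2_01.
have [wfi wgi] := (RintegrableZ w1 fi, RintegrableZ w2 gi).
have [wfy1 wgy2] := (RintegrableZ w1 fy1, RintegrableZ w2 gy2).
have mini := Rintegrable_min wfi wgi.
rewrite -!RintegralZl // -!RintegralD //; try exact: RintegrableD.
apply: le_Rintegral => //; first by do 2?apply: RintegrableD.
  exact: RintegrableD.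
move=> x _; set m := Order.min _ _.
have m1 : m <= w1 * f x by rewrite ge_min lexx.
have m2 : m <= w2 * g x by rewrite ge_min lexx orbT.
have e1 : 0 <= (w1 * f x - m) * y2 x by rewrite mulr_ge0 ?subr_ge0.
have e2 : 0 <= (w2 * g x - m) * y1 x by rewrite mulr_ge0 ?subr_ge0.
have := y12 x; nra.
Qed.
End Integrability.

Lemma sum_o2 (V : nmodType) (F : 'I_2 -> V) : \sum_(i < 2) F i = F o2_1 + F o2_2.
Proof.
by rewrite big_ord_recl big_ord1; congr (F _ + F _); apply/val_inj; rewrite /= inordK.
Qed.

Lemma POVM2_exists (R : realType) (n : nat) : exists M : 'I_2 -> 'M[R[i]]_n, is_POVM M.
Proof.
exists (fun i => if i == o2_1 then 1%:M else 0); split.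
- move=> i v; case: ifP => _; last by rewrite mulmx0 mul0mx mxE.
  rewrite mulmx1 mxE; apply: sumr_ge0 => j _; rewrite /adj !mxE mulrC.
  exact: mul_conjC_ge0.
- by rewrite sum_o2 eqxx; case: eqP => [/(congr1 val)|_]; rewrite /= ?inordK ?addr0.
Qed.

Section Distinguishability.
Context {R : realType} {n : nat} {d : measure_display} {T : measurableType d}.
Context {mu : {measure set T -> \bar R}} {xi : ('I_2 -> 'M[R[i]]_n) -> 'I_2 -> T -> R}.
Hypothesis xi_response : forall M, is_POVM M ->
  (forall i, measurable_fun setT (xi M i)) /\ (forall i l, 0 <= xi M i l) /\
  (forall l, \sum_(i < 2) xi M i l = 1).

Lemma DQw_le_overlap {sigma1 sigma2 : 'M[R[i]]_n} {f1 f2 : T -> R} {w1 w2 : R} :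
  0 <= w1 -> 0 <= w2 -> is_density mu f1 -> is_density mu f2 ->
  (forall M, is_POVM M -> forall i,
     (prob sigma1 M i)%:E = (\int[mu]_x (f1 x * xi M i x)%:E)%E) ->
  (forall M, is_POVM M -> forall i,
     (prob sigma2 M i)%:E = (\int[mu]_x (f2 x * xi M i x)%:E)%E) ->
  DQw sigma1 w1 sigma2 w2 <= w1 + w2 - \int[mu]_x Order.min (w1 * f1 x) (w2 * f2 x).
Proof.
move=> w10 w20 df1 df2 rep1 rep2; apply: ge_sup.
  by have [M hM] := POVM2_exists R n; eexists; exists M.
move=> _ [M [hM ->]]; have [mxi [xi0 xi1]] := xi_response _ hM.
have -> : prob sigma1 M o2_1 = \int[mu]_x (f1 x * xi M o2_1 x).
  by rewrite /Rintegral -rep1.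
have -> : prob sigma2 M o2_2 = \int[mu]_x (f2 x * xi M o2_2 x).
  by rewrite /Rintegral -rep2.
have xi12 l : xi M o2_1 l + xi M o2_2 l = 1 by rewrite -(xi1 l) sum_o2.
have := success_add_overlap_le (Rintegrable_density df1) (Rintegrable_density df2)
  (mxi o2_1) (mxi o2_2) df1.2.1 df2.2.1 (xi0 o2_1) (xi0 o2_2) xi12 w10 w20.
by rewrite (Rintegral_density df1) (Rintegral_density df2); lra.
Qed.

End Distinguishability.

Lemma min_pair_le_triple (R : realFieldType) (a b u v : R) :
  0 <= a <= 1 -> 0 <= b -> 0 <= u -> 0 <= v ->
  Order.min ((1 + b) * u) ((1 + b) * v)
  <= Order.min (Order.min ((1 + b) * u) ((1 + b) * v)) ((a + b) * (u + v))
     + (2 - 2 * a) * Order.min (2^-1 * u) (2^-1 * v).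
Proof.
move=> /andP[a0 a1] b0 u0 v0.
rewrite -!minr_pMr ?invr_ge0 ?ler0n ?addr_ge0 // -lerBlDr le_min.
have m0 : 0 <= Order.min u v by rewrite le_min u0.
have muv : Order.min u v <= u + v by rewrite ge_min lerDl v0.
by apply/andP; split; nra.
Qed.

Lemma min_scale_half (R : realFieldType) (c u y z : R) :
  Order.min (c * u) (y * z) = 2 * Order.min (c / 2 * u) (y * (2^-1 * z)).
Proof. by rewrite minr_pMr ?ler0n //; congr (Order.min _ _); field. Qed.

Lemma le_omegaQ_sub_BQ (R : realType) (n : nat) (psi1 psi2 : 'cV[R[i]]_n)
    (a b X W1 W2 : R) :
  a <= 1 ->
  DQ psi1 psi2 <= 1 - X ->
  DQw (Defs.proj psi1) ((1 + b) / 2) (mixture psi1 psi2) (a + b)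
    <= (1 + b) / 2 + (a + b) - W1 ->
  DQw (Defs.proj psi2) ((1 + b) / 2) (mixture psi1 psi2) (a + b)
    <= (1 + b) / 2 + (a + b) - W2 ->
  (2 - 2 * a) * X + 2 * W1 + 2 * W2 - 2 * (a + b)
    <= omegaQ psi1 psi2 a b - BQ psi1 psi2 a b.
Proof.
move=> a1; rewrite /omegaQ /BQ /=.
(* Abstracting the suprema keeps lra from unfolding them when comparing atoms. *)
move: (DQ _ _) (DQw (Defs.proj psi1) _ _ _) (DQw (Defs.proj psi2) _ _ _) (SGam _ _ _ _).
move=> D D1 D2 S hD hD1 hD2.
have a1' : 0 <= 1 - a by rewrite subr_ge0.
have := ler_wpM2l a1' hD.
lra.
Qed.

Ltac solve_Rintegrable :=
  do ![apply: Rintegrable_min | apply: RintegrableZ | apply: RintegrableD | assumption].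

Lemma omegaL_le_overlaps {R : realType} {d : measure_display} {T : measurableType d}
    {mu : {measure set T -> \bar R}} {m1 m2 mr : T -> R} {a b : R} :
  0 <= a <= 1 -> 0 <= b ->
  is_density mu m1 -> is_density mu m2 -> is_density mu mr ->
  (forall l, mr l = 2^-1 * (m1 l + m2 l)) ->
  (omegaL mu m1 m2 a b <=
   ((2 - 2 * a) * \int[mu]_x Order.min (2^-1 * m1 x) (2^-1 * m2 x)
    + 2 * \int[mu]_x Order.min ((1 + b) / 2 * m1 x) ((a + b) * mr x)
    + 2 * \int[mu]_x Order.min ((1 + b) / 2 * m2 x) ((a + b) * mr x)
    - 2 * (a + b))%:E)%E.
Proof.
move=> a01 b0 d1 d2 dr hmr.
have [i1 i2] := (Rintegrable_density d1, Rintegrable_density d2).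
have ir := Rintegrable_density dr.
rewrite /omegaL -!EFin_Rintegral -?EFinD ?lee_fin; try by solve_Rintegrable.
have hA : \int[mu]_x Order.min ((1 + b) * m1 x) ((1 + b) * m2 x)
    <= \int[mu]_x Order.min (Order.min ((1 + b) * m1 x) ((1 + b) * m2 x))
                            ((a + b) * (m1 x + m2 x))
       + (2 - 2 * a) * \int[mu]_x Order.min (2^-1 * m1 x) (2^-1 * m2 x).
  apply: le_Rintegral_lin; try solve_Rintegrable.
  by move=> x; apply: min_pair_le_triple => //; [exact: d1.2.1 | exact: d2.2.1].
have hB (m : T -> R) : mu.-integrable setT (EFin \o m) ->
    \int[mu]_x Order.min ((1 + b) * m x) ((a + b) * (m1 x + m2 x))
    = 2 * \int[mu]_x Order.min ((1 + b) / 2 * m x) ((a + b) * mr x).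
  move=> mi; rewrite -RintegralZl //; last by solve_Rintegrable.
  by apply: eq_Rintegral => x _; rewrite hmr min_scale_half.
rewrite (hB _ i1) (hB _ i2).
lra.
Qed.

Theorem theorem2 (R : realType) (n : nat) (psi1 psi2 : 'cV[R[i]]_n) (a b : R)
  (hpsi1 : unit_vector psi1) (hpsi2 : unit_vector psi2)
  (ha : 0 <= a <= 1) (hb : 0 <= b <= 1)
  (d : measure_display) (T : measurableType d) (mu : {measure set T -> \bar R})
  (m1 m2 mr : T -> R)
  (xi : forall k, ('I_k -> 'M[R[i]]_n) -> 'I_k -> T -> R)
  (hmodel : is_ontological_model mu psi1 psi2 m1 m2 mr xi) :
  (omegaL mu m1 m2 a b
     <= (omegaQ psi1 psi2 a b - BQ psi1 psi2 a b)%:E)%E.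
Proof.
case: hmodel => [[d1 d2 dr] hxi hprob hmr].
have [a0 a1] := andP ha; have b0 : 0 <= b by case/andP: hb.
have w0 : 0 <= 2^-1 :> R by rewrite invr_ge0 ler0n.
have wb : 0 <= (1 + b) / 2 by rewrite divr_ge0 ?addr_ge0.
have wab : 0 <= a + b by rewrite addr_ge0.
apply: le_trans (omegaL_le_overlaps ha b0 d1 d2 dr hmr) _; rewrite lee_fin.
apply: le_omegaQ_sub_BQ => //.
- (* only the leading 1: the numeral 2 in 2^-1 also contains a 1 *)
  rewrite [X in _ <= X - _](splitr 1) mul1r.
  by apply: (DQw_le_overlap (hxi 2%N)) => // M hM i; case: (hprob 2%N M hM i).
- by apply: (DQw_le_overlap (hxi 2%N)) => // M hM i; case: (hprob 2%N M hM i).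
- by apply: (DQw_le_overlap (hxi 2%N)) => // M hM i; case: (hprob 2%N M hM i).
Qed.
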